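(* Let $d\ge2$ and let $H$ be a finite family of closed halfspaces in $\mathbb{R}^d$ whose bounding hyperplanes pass through the origin, such that no $h\in H$ is bounded by the hyperplane $T_d=\{x\in\mathbb{R}^d\mid x_d=0\}$. Let $C=\bigcap_{h\in H}h$. If $C\subseteq T_d^>\cup\{0\}$, where $T_d^>=\{x\in\mathbb{R}^d\mid x_d>0\}$, then there is a subfamily $H'\subseteq H$ with $|H'|\le 2d-2$ such that $\bigcap_{h\in H'}h\subseteq T_d^>\cup\{0\}$. *)

From mathcomp Require Import all_boot all_order all_algebra.
Set Implicit Arguments. Unset Strict Implicit. Unset Printing Implicit Defensive.
Import Order.TTheory GRing.Theory Num.Theory.
Local Open Scope ring_scope.

Definition dotv (R : realFieldType) (d : nat) (a x : 'rV[R]_d) : R :=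
  \sum_(i < d) a 0 i * x 0 i.

(* The closed halfspace { x | <a, x> >= 0 } whose bounding hyperplane
   { x | <a, x> = 0 } passes through the origin (a <> 0 required separately). *)
Definition halfspace (R : realFieldType) (d : nat) (a : 'rV[R]_d) : pred 'rV[R]_d :=
  fun x => 0 <= dotv a x.

Definition cap_halfspaces (R : realFieldType) (d m : nat)
  (a : 'I_m -> 'rV[R]_d) (S : {set 'I_m}) : pred 'rV[R]_d :=
  fun x => [forall i in S, halfspace (a i) x].

(* T_d^> ∪ {0}, in dimension d = n.+2; x_d is the last coordinate. *)
Definition upper_or_zero (R : realFieldType) (n : nat) (x : 'rV[R]_n.+2) : Prop :=
  0 < x 0 ord_max \/ x = 0.

Definition last_basis (R : realFieldType) (n : nat) : 'rV[R]_n.+2 :=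
  \row_(i < n.+2) (if i == ord_max then 1 else 0).

From mathcomp Require Import all_boot all_order all_algebra.
From mathcomp Require Import reals zify.
From Stdlib Require Import Classical.
Import Order.TTheory GRing.Theory Num.Theory.
Set Implicit Arguments. Unset Strict Implicit. Unset Printing Implicit Defensive.
Local Open Scope ring_scope.

(* By Farkas' lemma e_d is a nonnegative combination of the normals a_i, and a
   Caratheodory reduction makes its support Y linearly independent; |Y| >= 2 since no
   a_i is parallel to e_d.  On Y^perp the cone C is pointed, and a cone pointed inside
   a k-dimensional subspace is already cut down to {0} by 2k of its halfspaces.  The Y
   halfspaces together with these give |Y| + 2(d - |Y|) <= 2d - 2 halfspaces: a point
   x of their intersection with x_d <= 0 has sum_Y c_i <a_i, x> = x_d <= 0 with
   nonnegative terms, hence lies in Y^perp, hence is 0. *)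

Section Dot.
Variables (R : realFieldType) (d : nat).
Implicit Types (a b x y : 'rV[R]_d).

Lemma dotvC a x : dotv a x = dotv x a.
Proof. by apply: eq_bigr => i _; rewrite mulrC. Qed.

Lemma dotvDl a b x : dotv (a + b) x = dotv a x + dotv b x.
Proof. by rewrite /dotv -big_split; apply: eq_bigr => i _; rewrite mxE mulrDl. Qed.

Lemma dotvZl k a x : dotv (k *: a) x = k * dotv a x.
Proof. by rewrite /dotv mulr_sumr; apply: eq_bigr => i _; rewrite mxE mulrA. Qed.

Lemma dotvNl a x : dotv (- a) x = - dotv a x.
Proof. by rewrite -scaleN1r dotvZl mulN1r. Qed.

Lemma dotvBl a b x : dotv (a - b) x = dotv a x - dotv b x.
Proof. by rewrite dotvDl dotvNl. Qed.

Lemma dotvBr a x y : dotv a (x - y) = dotv a x - dotv a y.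
Proof. by rewrite !(dotvC a) dotvBl. Qed.

Lemma dotvZr k a x : dotv a (k *: x) = k * dotv a x.
Proof. by rewrite !(dotvC a) dotvZl. Qed.

Lemma dotv0r a : dotv a 0 = 0.
Proof. by rewrite -(scale0r 0) dotvZr mul0r. Qed.

Lemma dotv_suml (I : finType) (P : pred I) (F : I -> 'rV[R]_d) x :
  dotv (\sum_(i | P i) F i) x = \sum_(i | P i) dotv (F i) x.
Proof.
apply: (big_morph (fun a => dotv a x) (fun a b => dotvDl a b x)).
by rewrite dotvC dotv0r.
Qed.

Lemma dotvv_le0 x : dotv x x <= 0 -> x = 0.
Proof.
have sq_ge0 i : predT i -> 0 <= x 0 i * x 0 i by rewrite -expr2 sqr_ge0.
move=> le0; have xx0 : dotv x x = 0 by apply/eqP; rewrite eq_le le0 sumr_ge0.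
apply/rowP => i; have /eqP := psumr_eq0P sq_ge0 xx0 (i := i) isT.
by rewrite mulf_eq0 orbb mxE => /eqP.
Qed.

End Dot.

Section Farkas.
Variables (R : realFieldType) (d : nat).
Implicit Types (b u v p y : 'rV[R]_d).

Definition shear u p v : 'rV[R]_d := v - (dotv v p / dotv u p) *: u.

Lemma dotv_shear u p v y : dotv v (shear p u y) = dotv (shear u p v) y.
Proof.
rewrite /shear dotvBr dotvZr dotvBl dotvZl (dotvC y u) (dotvC p u); congr (_ - _).
by rewrite mulrAC [RHS]mulrAC; congr (_ * _); exact: mulrC.
Qed.

Lemma shear_id u p : dotv u p != 0 -> shear u p u = 0.
Proof. by move=> up_neq0; rewrite /shear divff // scale1r subrr. Qed.

Lemma shear_sum u p (I : finType) (P : pred I) (lam : I -> R) (F : I -> 'rV[R]_d) :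
  shear u p (\sum_(i | P i) lam i *: F i) = \sum_(i | P i) lam i *: shear u p (F i).
Proof.
rewrite /shear dotv_suml mulr_suml scaler_suml -sumrB; apply: eq_bigr => i _.
by rewrite scalerBr scalerA dotvZl mulrA.
Qed.

Lemma shear_eqE u p b v :
  shear u p b = shear u p v -> b = ((dotv b p - dotv v p) / dotv u p) *: u + v.
Proof.
move/(canRL (subrK _)); rewrite /shear => {1}->.
by rewrite mulrBl scalerBl [LHS]addrC [LHS]addrCA [LHS]addrC.
Qed.

(* Induction on the constraints: if [b] already follows from those in [P :\ i],
   drop [F i]; otherwise pick [p] violating both [F i] and [b], and shear everything
   along [F i] so that the constraint [F i] disappears. *)
Lemma farkas (I : finType) (F : I -> 'rV[R]_d) (P : {set I}) b :
  (forall y, (forall i, i \in P -> 0 <= dotv (F i) y) -> 0 <= dotv b y) ->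
  exists2 lam : I -> R, (forall i, 0 <= lam i) & b = \sum_(i in P) lam i *: F i.
Proof.
have [k] := ubnP #|P|; elim: k F P b => // k IH F P b; rewrite ltnS => P_le hb.
have [P0|[i iP]] := set_0Vmem P.
  exists (fun=> 0) => //; rewrite P0 big_set0; apply: dotvv_le0.
  by rewrite -oppr_ge0 -dotvNl dotvC; apply: hb => j; rewrite P0 inE.
set P' := P :\ i.
have P'_lt : (#|P'| < k)%N by move: P_le; rewrite (cardsD1 i P) iP add1n.
have [hb'|] :=
  classic (forall y, (forall j, j \in P' -> 0 <= dotv (F j) y) -> 0 <= dotv b y).
  have [lam lam_ge0 ->] := IH F P' b P'_lt hb'.
  exists (fun j => if j == i then 0 else lam j) => [j|]; first by case: ifP.
  rewrite (big_setD1 i iP) /= eqxx scale0r add0r; apply: eq_bigr => j.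
  by rewrite in_setD1 => /andP[/negbTE ->].
move=> /not_all_ex_not [p hp].
have [p_cone /negP] := imply_to_and _ _ hp; rewrite -ltNge => bp_lt0.
set u := F i.
have up_lt0 : dotv u p < 0.
  rewrite ltNge; apply/negP => up_ge0; move: bp_lt0; rewrite ltNge hb // => j jP.
  by case: (eqVneq j i) => [->|ji] //; apply: p_cone; rewrite in_setD1 ji.
have [|lam lam_ge0 shear_b] := IH (fun j => shear u p (F j)) P' (shear u p b) P'_lt.
  move=> y hy; rewrite -dotv_shear; apply: hb => j jP.
  have [->|ji] := eqVneq j i; last by rewrite dotv_shear hy // in_setD1 ji.
  by rewrite dotv_shear shear_id ?lt_eqF // dotvC dotv0r.
set L := \sum_(j in P') lam j *: F j.
have L_ge0 : 0 <= dotv L p.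
  by rewrite dotv_suml sumr_ge0 // => j jP'; rewrite dotvZl mulr_ge0 ?p_cone.
exists (fun j => if j == i then (dotv b p - dotv L p) / dotv u p else lam j) => [j|].
  case: ifP => // _; rewrite -mulrNN -invrN divr_ge0 // oppr_ge0 ltW //.
  by rewrite subr_lt0 (lt_le_trans bp_lt0).
rewrite (big_setD1 i iP) /= eqxx (eq_bigr (fun j => lam j *: F j)); last first.
  by move=> j; rewrite in_setD1 => /andP[/negbTE ->].
by apply: shear_eqE; rewrite shear_b shear_sum.
Qed.

End Farkas.

Lemma min_ratio_test (R : realFieldType) (I : finType) (c mu : I -> R) i0 :
  (forall i, 0 <= c i) -> (forall i, c i = 0 -> mu i = 0) -> mu i0 != 0 ->
  exists t, (forall i, 0 <= c i - t * mu i) /\ exists2 j, c j != 0 & c j - t * mu j = 0.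
Proof.
move=> c_ge0; wlog mu_gt0 : mu / 0 < mu i0 => [hwlog c0_mu0 mu0|c0_mu0 _].
  have [mu_gt0|mu_lt0|mu_eq0] := ltrgtP 0 (mu i0); first exact: hwlog.
    have [t [ht [j cj htj]]] : exists t, (forall i, 0 <= c i - t * - mu i) /\
        exists2 j, c j != 0 & c j - t * - mu j = 0.
      by apply: hwlog => [|i /c0_mu0 ->|]; rewrite ?oppr_gt0 ?oppr0 ?oppr_eq0.
    by exists (- t); split => [i|]; [|exists j]; rewrite // mulNr -mulrN.
  by rewrite -mu_eq0 eqxx in mu0.
have [j mu_j_gt0 j_min] :=
  @arg_minP _ _ I i0 (fun j => 0 < mu j) (fun j => c j / mu j) mu_gt0.
exists (c j / mu j); split => [i|].
  rewrite subr_ge0; have [mu_i_gt0|mu_i_le0] := ltP 0 (mu i).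
    by rewrite -ler_pdivlMr // j_min.
  by apply: le_trans (c_ge0 i); rewrite mulr_ge0_le0 // divr_ge0 // ltW.
exists j; last by rewrite divfK ?subrr // gt_eqF.
by apply/eqP => /c0_mu0 mu_j0; rewrite mu_j0 ltxx in mu_j_gt0.
Qed.

Section Cone.
Variables (R : realFieldType) (d m : nat) (a : 'I_m -> 'rV[R]_d).
Implicit Types (c mu : 'I_m -> R) (S T Y : {set 'I_m}) (v x : 'rV[R]_d) (W : 'M[R]_d).

Definition comb c : 'rV[R]_d := \sum_i c i *: a i.
Definition supp c : {set 'I_m} := [set i | c i != 0].
Definition spanv T : 'M[R]_d := (\sum_(i in T) <<a i>>)%MS.
Definition orthv T x := forall i, i \in T -> dotv (a i) x = 0.
Definition free_mod W Y :=
  forall mu, supp mu \subset Y -> (comb mu <= W)%MS -> forall i, mu i = 0.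

Lemma cap_halfspacesP S x :
  reflect (forall i, i \in S -> 0 <= dotv (a i) x) (cap_halfspaces a S x).
Proof. exact: forall_inP. Qed.

Lemma comb_supp c : comb c = \sum_(i in supp c) c i *: a i.
Proof.
rewrite /comb (bigID (mem (supp c))) /= [X in _ + X]big1 ?addr0 // => i.
by rewrite inE negbK => /eqP ->; rewrite scale0r.
Qed.

Lemma combB c c' : comb (fun i => c i - c' i) = comb c - comb c'.
Proof. by rewrite /comb -sumrB; apply: eq_bigr => i _; rewrite scalerBl. Qed.

Lemma combZ t c : comb (fun i => t * c i) = t *: comb c.
Proof. by rewrite /comb scaler_sumr; apply: eq_bigr => i _; rewrite scalerA. Qed.

Lemma comb_delta j : comb (fun i => (i == j)%:R) = a j.
Proof.
rewrite /comb (bigD1 j) //= eqxx scale1r big1 ?addr0 // => i /negbTE ->.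
by rewrite scale0r.
Qed.

Lemma dotv_comb c x : dotv (comb c) x = \sum_i c i * dotv (a i) x.
Proof. by rewrite dotv_suml; apply: eq_bigr => i _; rewrite dotvZl. Qed.

Lemma spanv0 : spanv set0 = 0.
Proof. by rewrite /spanv big_set0. Qed.

Lemma row_spanv T i : i \in T -> (a i <= spanv T)%MS.
Proof. by move=> iT; apply: (sumsmx_sup i) => //; rewrite genmxE. Qed.

Lemma spanvS T T' : T \subset T' -> (spanv T <= spanv T')%MS.
Proof.
by move=> /subsetP sTT'; apply/sumsmx_subP => i /sTT' /row_spanv; rewrite genmxE.
Qed.

Lemma spanv_comb T v : (v <= spanv T)%MS -> exists2 c, supp c \subset T & v = comb c.
Proof.
move/sub_sumsmxP => [u ->].
have coef i : exists k : R, u i *m <<a i>>%MS == k *: a i.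
  have /submxP [D ->] : (u i *m <<a i>> <= a i)%MS by rewrite -(genmxE (a i)) submxMl.
  by exists (D 0 0); rewrite {1}(mx11_scalar D) mul_scalar_mx.
exists (fun i => if i \in T then xchoose (coef i) else 0).
  by apply/subsetP => i; rewrite inE; case: ifP => //; rewrite eqxx.
rewrite /comb (big_mkcond (fun i => i \in T)); apply: eq_bigr => i _.
by case: ifP => _; [apply/eqP; exact: (xchooseP (coef i)) | rewrite scale0r].
Qed.

Lemma orthvS T T' x : T' \subset T -> orthv T x -> orthv T' x.
Proof. by move=> /subsetP sT'T xT i /sT'T /xT. Qed.

Lemma dotv_comb_orthv c x : orthv (supp c) x -> dotv (comb c) x = 0.
Proof.
move=> x_orth; rewrite dotv_comb big1 // => i _.
by have [->|ci] := eqVneq (c i) 0; rewrite ?mul0r // x_orth ?mulr0 ?inE.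
Qed.

Lemma orthv_spanv T x v : orthv T x -> (v <= spanv T)%MS -> dotv v x = 0.
Proof. by move=> xT /spanv_comb [c sT ->]; apply: dotv_comb_orthv; apply: orthvS xT. Qed.

Lemma comb_supp_le1 c : (#|supp c| <= 1)%N -> comb c != 0 ->
  exists2 j, c j != 0 & comb c = c j *: a j.
Proof.
rewrite leq_eqVlt ltnS leqn0 => /orP[/cards1P[j supp_j] _|/eqP/cards0_eq supp0].
  have : j \in supp c by rewrite supp_j set11.
  by rewrite inE => cj; exists j => //; rewrite comb_supp supp_j big_set1.
by rewrite comb_supp supp0 big_set0 eqxx.
Qed.

Lemma comb_orthv c x : (forall i, 0 <= c i) -> cap_halfspaces a (supp c) x ->
  dotv (comb c) x <= 0 -> orthv (supp c) x.
Proof.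
move=> c_ge0 /cap_halfspacesP x_cone comb_le0 i i_supp.
have term_ge0 j : predT j -> 0 <= c j * dotv (a j) x.
  have [->|cj] := eqVneq (c j) 0; first by rewrite mul0r.
  by rewrite mulr_ge0 // x_cone // inE.
have comb0 : \sum_j c j * dotv (a j) x = 0.
  by apply/eqP; rewrite eq_le -dotv_comb comb_le0 dotv_comb (sumr_ge0 _ term_ge0).
have /eqP := psumr_eq0P term_ge0 comb0 (i := i) isT.
by move: i_supp; rewrite inE mulf_eq0 => /negbTE -> /eqP.
Qed.

(* Orthogonality to [a i], [i \in T], is encoded by the extra constraints [- a i]. *)
Lemma farkas_orthv T b :
  (forall x, orthv T x -> cap_halfspaces a setT x -> 0 <= dotv b x) ->
  exists2 c, (forall i, 0 <= c i) & (b - comb c <= spanv T)%MS.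
Proof.
move=> hb.
pose G (z : 'I_m + 'I_m) := match z with inl i => a i | inr i => - a i end.
pose P := [set z : 'I_m + 'I_m | match z with inl _ => true | inr i => i \in T end].
have [lam lam_ge0 ->] :
    exists2 lam, (forall z, 0 <= lam z) & b = \sum_(z in P) lam z *: G z.
  apply: farkas => x x_cone; apply: hb.
    move=> i iT; apply/eqP; rewrite eq_le -oppr_ge0 -dotvNl.
    by rewrite (x_cone (inr i)) ?(x_cone (inl i)) ?inE.
  by apply/cap_halfspacesP => i _; apply: (x_cone (inl i)); rewrite inE.
exists (fun i => lam (inl i)) => //.
rewrite big_sumType /= (eq_bigl predT) => [|i]; last by rewrite inE.
rewrite addrAC subrr add0r; apply: summx_sub => i; rewrite inE => iT.
by rewrite scalemx_sub // eqmx_opp row_spanv.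
Qed.

Lemma caratheodory_mod W b c : (forall i, 0 <= c i) -> (b - comb c <= W)%MS ->
  exists c', [/\ forall i, 0 <= c' i, (b - comb c' <= W)%MS & free_mod W (supp c')].
Proof.
have [k] := ubnP #|supp c|; elim: k c => // k IH c; rewrite ltnS => supp_le c_ge0 bc_W.
have [free_c|/not_all_ex_not [mu hmu]] := classic (free_mod W (supp c)).
  by exists c.
have [mu_supp hmu'] := imply_to_and _ _ hmu.
have [mu_W /not_all_ex_not [i0 /eqP mu_i0]] := imply_to_and _ _ hmu'.
have c0_mu0 i : c i = 0 -> mu i = 0.
  move=> ci0; apply/eqP; have := subsetP mu_supp i; rewrite !inE ci0 eqxx.
  by case: (mu i == 0) => // /(_ isT).
have [t [ct_ge0 [j cj ctj]]] := min_ratio_test c_ge0 c0_mu0 mu_i0.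
apply: (IH (fun i => c i - t * mu i)) => //.
  have supp_proper : supp (fun i => c i - t * mu i) \proper supp c.
    rewrite properE; apply/andP; split.
      apply/subsetP => i; rewrite !inE; apply: contraNneq => ci0.
      by rewrite ci0 (c0_mu0 i ci0) mulr0 subr0.
    by apply/subsetP => /(_ j); rewrite !inE ctj eqxx cj => /(_ isT).
  exact: leq_trans (proper_card supp_proper) supp_le.
by rewrite combB combZ opprB addrCA addmx_sub ?scalemx_sub.
Qed.

Lemma farkas_free_mod T b :
  (forall x, orthv T x -> cap_halfspaces a setT x -> 0 <= dotv b x) ->
  exists c, [/\ forall i, 0 <= c i, (b - comb c <= spanv T)%MS
              & free_mod (spanv T) (supp c)].
Proof. by move=> /farkas_orthv [c c_ge0 /(caratheodory_mod c_ge0)]. Qed.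

Lemma free_modS W Y Y' : Y' \subset Y -> free_mod W Y -> free_mod W Y'.
Proof. by move=> sY'Y free mu /subset_trans /(_ sY'Y); apply: free. Qed.

Lemma free_mod_notin W Y j : free_mod W Y -> j \in Y -> ~~ (a j <= W + spanv (Y :\ j))%MS.
Proof.
move=> free jY; apply/negP => /sub_addsmxP [[u w] /= aj_eq].
have /spanv_comb [c /subsetP c_supp c_eq] : (w *m spanv (Y :\ j) <= spanv (Y :\ j))%MS.
  exact: submxMl.
have cj0 : c j = 0.
  by apply/eqP/negPn/negP => cj; have := c_supp j; rewrite !inE eqxx cj => /(_ isT).
have /eqP : (j == j)%:R - c j = 0 :> R.
  apply: (free (fun i => (i == j)%:R - c i)).
    apply/subsetP => i; rewrite inE; have [-> //|ij] := eqVneq i j.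
    by rewrite sub0r oppr_eq0 => ci; have := c_supp i; rewrite !inE ci => /(_ isT) /andP[].
  by rewrite combB comb_delta aj_eq c_eq addrK submxMl.
by rewrite eqxx cj0 subr0 oner_eq0.
Qed.

Lemma rank_free_mod W Y : free_mod W Y -> (\rank W + #|Y| <= \rank (W + spanv Y))%N.
Proof.
have [k] := ubnP #|Y|; elim: k Y => // k IH Y; rewrite ltnS => Y_le free_Y.
have [->|[j jY]] := set_0Vmem Y; first by rewrite cards0 addn0 mxrankS // addsmxSl.
have Y'_lt : (#|Y :\ j| < k)%N by move: Y_le; rewrite (cardsD1 j) jY add1n.
have lt_span : (W + spanv (Y :\ j) < W + spanv Y)%MS.
  rewrite ltmxE addsmxS ?spanvS ?subD1set //=; apply: contra (free_mod_notin free_Y jY).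
  by apply: submx_trans; rewrite (submx_trans (row_spanv jY)) ?addsmxSr.
rewrite (cardsD1 j Y) jY add1n addnS.
exact: leq_ltn_trans (IH _ Y'_lt (free_modS (subD1set Y j) free_Y)) (rank_ltmx lt_span).
Qed.

(* A nonzero [x0] orthogonal to [T] violates some [a i0]; writing [- a i0] as a
   nonnegative combination of a family [Y] free modulo [spanv T] and recursing on
   [T :|: Y] costs [1 + #|Y| + 2 (k - #|Y|) <= 2 k] halfspaces, [k] the codimension. *)
Lemma pointed_subfamily T :
  (forall x, orthv T x -> cap_halfspaces a setT x -> x = 0) ->
  exists S, (#|S| <= 2 * (d - \rank (spanv T)))%N /\
            (forall x, orthv T x -> cap_halfspaces a S x -> x = 0).
Proof.
have [k] := ubnP (d - \rank (spanv T)); elim: k T => // k IH T.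
rewrite ltnS => T_le pointed.
have [orth0|/not_all_ex_not [x0 hx0]] := classic (forall x, orthv T x -> x = 0).
  by exists set0; split => [|x /orth0 //]; rewrite cards0.
have [x0T /eqP x0_neq0] := imply_to_and _ _ hx0.
have [i0 ai0x0_lt0] : exists i0, dotv (a i0) x0 < 0.
  apply: NNPP => no_neg; apply: (negP x0_neq0); apply/eqP/pointed => //.
  apply/cap_halfspacesP => i _; rewrite leNgt; apply/negP => lt0.
  by apply: no_neg; exists i.
have [|c [c_ge0 hc free_c]] := farkas_free_mod (T := T) (b := - a i0).
  by move=> x xT /(pointed x xT) ->; rewrite dotv0r.
set Y := supp c in free_c.
have Y_gt0 : (0 < #|Y|)%N.
  rewrite card_gt0; apply: contraTneq hc => Y0.
  rewrite comb_supp -/Y Y0 big_set0 subr0; apply/negP => /(orthv_spanv x0T).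
  by rewrite dotvNl => /eqP; rewrite oppr_eq0 lt_eqF.
have rank_TY : (\rank (spanv T) + #|Y| <= \rank (spanv (T :|: Y)))%N.
  apply: leq_trans (rank_free_mod free_c) (mxrankS _).
  by rewrite addsmx_sub !spanvS ?subsetUl ?subsetUr.
have rank_TY_le := rank_leq_col (spanv (T :|: Y)).
have [|x xTY|Z [Z_le Z_pointed]] := IH (T :|: Y); first by lia.
  by apply: pointed; apply: orthvS xTY; rewrite subsetUl.
exists (i0 |: Y :|: Z); split.
  apply: (@leq_trans (#|Y|.+1 + #|Z|)); last by lia.
  by rewrite cardsU (leq_trans (leq_subr _ _)) // leq_add2r cardsU1 -add1n leq_add2r leq_b1.
move=> x xT /cap_halfspacesP x_cone; apply: Z_pointed; last first.
  by apply/cap_halfspacesP => i iZ; apply: x_cone; rewrite !inE iZ !orbT.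
have xY : orthv Y x.
  apply: comb_orthv => //.
    by apply/cap_halfspacesP => i iY; apply: x_cone; rewrite in_setU in_setU1 iY orbT.
  have /eqP := orthv_spanv xT hc; rewrite dotvBl dotvNl subr_eq0 => /eqP <-.
  by rewrite oppr_le0 x_cone // !inE eqxx.
by move=> i; rewrite inE => /orP[/xT|/xY].
Qed.

End Cone.

Lemma dotv_last (R : realFieldType) n (x : 'rV[R]_n.+2) :
  dotv (last_basis R n) x = x 0 ord_max.
Proof.
rewrite /dotv (bigD1 ord_max) //= big1 ?addr0 => [|i /negbTE i_neq].
  by rewrite mxE eqxx mul1r.
by rewrite mxE i_neq mul0r.
Qed.

Lemma last_basis_neq0 (R : realFieldType) n : last_basis R n != 0.
Proof. by apply/eqP => /rowP /(_ ord_max); rewrite !mxE eqxx; apply/eqP/oner_neq0. Qed.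

Theorem lemma13 (R : realType) (n m : nat) (a : 'I_m -> 'rV[R]_n.+2)
  (ha_nz : forall i, a i != 0)
  (ha_notTd : forall i, forall c : R, a i != c *: last_basis R n)
  (hC : forall x : 'rV[R]_n.+2, cap_halfspaces a setT x -> upper_or_zero x) :
  exists S : {set 'I_m},
    (#|S| <= 2 * n.+2 - 2)%N /\
    (forall x : 'rV[R]_n.+2, cap_halfspaces a S x -> upper_or_zero x).
Proof.
(* [ha_nz] is not needed: it is the case [c = 0] of [ha_notTd]. *)
have [|c [c_ge0 hc free_c]] := farkas_free_mod (a := a) (T := set0) (b := last_basis R n).
  by move=> x _ /hC; rewrite dotv_last => -[/ltW|->]; rewrite ?mxE.
move: hc free_c; rewrite spanv0 submx0 subr_eq0 => /eqP e_comb free_c.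
set Y := supp c in free_c.
have Y_ge2 : (1 < #|Y|)%N.
  rewrite ltnNge; apply/negP => /(comb_supp_le1 (a := a)).
  rewrite -e_comb last_basis_neq0 => /(_ isT) [j cj e_cj].
  by move: (ha_notTd j (c j)^-1); rewrite e_cj scalerA mulVf // scale1r eqxx.
have rankY : (#|Y| <= \rank (spanv a Y))%N.
  by have := rank_free_mod free_c; rewrite mxrank0 adds0mx.
have [|Z [Z_le Z_pointed]] := pointed_subfamily (a := a) (T := Y).
  by move=> x xY /hC [|//]; rewrite -dotv_last e_comb dotv_comb_orthv // ltxx.
exists (Y :|: Z); split.
  by have := cardsU Y Z; have := rank_leq_col (spanv a Y); lia.
move=> x /cap_halfspacesP x_cone; have [|xd_le0] := ltP 0 (x 0 ord_max); first by left.
right; apply: Z_pointed; last first.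
  by apply/cap_halfspacesP => i iZ; apply: x_cone; rewrite inE iZ orbT.
apply: comb_orthv => //; last by rewrite -e_comb dotv_last.
by apply/cap_halfspacesP => i iY; apply: x_cone; rewrite inE iY.
Qed.
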